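(* Let $0<A<B$ and $h(t)=t\left(\frac{15-10t+3t^2}{8}\right)^2$. For $x>0$ define $$\rho(x)=\frac{\min\{h(t):t\in[A/x,B/x]\}}{\max\{h(t):t\in[A/x,B/x]\}} .$$ Then $\rho$ attains its maximum over $x\in(0,\infty)$ at $$x=\frac{3}{10}(A+B)+\frac25\sqrt{\tfrac12(A^2+B^2)+\tfrac1{16}(B-A)^2}.$$
   Context: Interpretation: if a Gabor frame operator $S$ has spectrum $[A,B]$ and is rescaled to $S/x$, one step of the iteration $\gamma\mapsto\frac{15}{8}\gamma-\frac54S_\gamma\gamma+\frac38S_\gamma^2\gamma$ (with $S_\gamma$ the frame operator of $(\gamma,a,b)$) maps the spectrum via $h$, and $\rho(x)$ is the resulting ratio of smallest to largest frame bound. *)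

From HB Require Import structures.
From mathcomp Require Import all_boot all_order all_algebra.
From mathcomp Require Import all_classical all_reals.
Set Implicit Arguments. Unset Strict Implicit. Unset Printing Implicit Defensive.
Import Order.TTheory GRing.Theory Num.Theory.
Local Open Scope classical_set_scope.
Local Open Scope ring_scope.

Definition hfun {R : realType} (t : R) : R :=
  t * ((15 - 10 * t + 3 * t ^+ 2) / 8) ^+ 2.

(* min / max of h over [a, b]; h is continuous, so these are attained and
   coincide with the infimum / supremum of the image. *)
Definition hmin {R : realType} (a b : R) : R :=
  inf [set hfun t | t in [set t : R | a <= t <= b]].
Definition hmax {R : realType} (a b : R) : R :=
  sup [set hfun t | t in [set t : R | a <= t <= b]].

Definition rho {R : realType} (A B x : R) : R :=
  hmin (A / x) (B / x) / hmax (A / x) (B / x).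

Definition xopt {R : realType} (A B : R) : R :=
  3 / 10 * (A + B)
  + 2 / 5 * Num.sqrt (1 / 2 * (A ^+ 2 + B ^+ 2) + 1 / 16 * (B - A) ^+ 2).

From HB Require Import structures.
From mathcomp Require Import all_boot all_order all_algebra.
From mathcomp Require Import all_classical all_reals.
From mathcomp Require Import ring lra.

Set Implicit Arguments.
Unset Strict Implicit.
Unset Printing Implicit Defensive.
Import Order.TTheory GRing.Theory Num.Theory.
Local Open Scope ring_scope.

(* Since h'(t) = 15 (t - 1)^2 (15 - 10 t + 3 t^2) / 64 >= 0, h is
   nondecreasing, so on [A/x, B/x] its min and max are h(A/x) and h(B/x) and
   rho(x) = (A/B) (q_A(x)/q_B(x))^2 with q_c(x) = 15 x^2 - 10 c x + 3 c^2.
   For a root x0 of 5 x^2 - 3 (A + B) x + A B one has the cross identity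
   q_A(x0) q_B(x) - q_B(x0) q_A(x) = 15 (q_A(x0) - q_B(x0)) (x - x0)^2, and
   at the larger root, which is xopt, q_A(x0) >= q_B(x0); so q_A/q_B, and
   with it rho, is maximal there. *)

Section MonotoneImageItv.
Variables (R : realType) (f : R -> R) (a b : R).
Hypotheses (f_homo : {homo f : s t / s <= t}) (ab : a <= b).

Lemma inf_image_itv : inf [set f t | t in [set t : R | a <= t <= b]] = f a.
Proof.
set E := (X in inf X).
have Ea : E (f a) by exists a => //=; rewrite ab lexx.
have lbE : lbound E (f a) by move=> _ [t /= /andP[a_le_t _] <-]; exact: f_homo.
apply/le_anti/andP; split; first by apply: (ge_inf _ Ea); exists (f a).
by apply: lb_le_inf => //; exists (f a).
Qed.

Lemma sup_image_itv : sup [set f t | t in [set t : R | a <= t <= b]] = f b.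
Proof.
set E := (X in sup X).
have Eb : E (f b) by exists b => //=; rewrite ab lexx.
have ubE : ubound E (f b) by move=> _ [t /= /andP[_ t_le_b] <-]; exact: f_homo.
apply/le_anti/andP; split; first by apply: ge_sup => //; exists (f b).
by apply: (ub_le_sup _ Eb); exists (f b).
Qed.

End MonotoneImageItv.

Lemma cube_quad_homo (R : realType) :
  {homo (fun u : R => u ^+ 3 * (9 * u ^+ 2 - 15 * u + 40)) : u v / u <= v}.
Proof.
move=> u v uv /=.
(* The difference quotient is symmetric in u, v, hence a polynomial in
   p = u + v and q = u v, and p^2/4 - q = ((v - u)/2)^2 >= 0. *)
set p := u + v; set q := u * v.
set K := 27 * p ^+ 2 - 30 * p + 40 - 9 * q - 9 * (p ^+ 2 / 4).
set M := 45 / 16 * p ^+ 2 - 15 / 2 * p + 30.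
have diffE : v ^+ 3 * (9 * v ^+ 2 - 15 * v + 40) - u ^+ 3 * (9 * u ^+ 2 - 15 * u + 40)
    = (v - u) * ((p ^+ 2 / 4 - q) * K + p ^+ 2 * M).
  by rewrite /K /M /p /q; field.
have disc_ge0 : 0 <= p ^+ 2 / 4 - q by rewrite /p /q; nra.
have K_ge0 : 0 <= K by rewrite /K; nra.
have M_ge0 : 0 <= M by rewrite /M; nra.
rewrite -subr_ge0 diffE mulr_ge0 ?subr_ge0 //.
by rewrite addr_ge0 // mulr_ge0 // sqr_ge0.
Qed.

Lemma hfun_shift (R : realType) (t : R) :
  hfun t = 1 + (t - 1) ^+ 3 * (9 * (t - 1) ^+ 2 - 15 * (t - 1) + 40) / 64.
Proof. by rewrite /hfun; field. Qed.

Lemma hfun_homo (R : realType) : {homo (@hfun R) : s t / s <= t}.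
Proof.
move=> s t st; rewrite !hfun_shift lerD2l ler_pM2r ?invr_gt0 //.
by apply: cube_quad_homo; rewrite lerD2r.
Qed.

Lemma hminE (R : realType) (a b : R) : a <= b -> hmin a b = hfun a.
Proof. exact: inf_image_itv (@hfun_homo R). Qed.

Lemma hmaxE (R : realType) (a b : R) : a <= b -> hmax a b = hfun b.
Proof. exact: sup_image_itv (@hfun_homo R). Qed.

(* x^2 (15 - 10 t + 3 t^2) at t = c / x. *)
Definition hquad {R : realType} (c x : R) : R := 15 * x ^+ 2 - 10 * c * x + 3 * c ^+ 2.

Lemma hquad_gt0 (R : realType) (c x : R) : 0 < c -> 0 < hquad c x.
Proof.
move=> c_gt0.
have -> : hquad c x = 15 * (x - c / 3) ^+ 2 + 4 / 3 * c ^+ 2 by rewrite /hquad; field.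
apply: ltr_wpDl; first by rewrite mulr_ge0 ?sqr_ge0.
by rewrite mulr_gt0 ?exprn_gt0 ?divr_gt0.
Qed.

Lemma hfun_div (R : realType) (c x : R) :
  x != 0 -> hfun (c / x) = c * hquad c x ^+ 2 / (64 * x ^+ 5).
Proof. by move=> x_neq0; rewrite /hfun /hquad; field. Qed.

Lemma rhoE (R : realType) (A B x : R) : 0 < A -> A <= B -> 0 < x ->
  rho A B x = A / B * (hquad A x / hquad B x) ^+ 2.
Proof.
move=> A_gt0 AB x_gt0; have B_gt0 := lt_le_trans A_gt0 AB.
have AxBx : A / x <= B / x by rewrite ler_pM2r ?invr_gt0.
have qA := hquad_gt0 x A_gt0; have qB := hquad_gt0 x B_gt0.
rewrite /rho hminE // hmaxE // !hfun_div ?gt_eqF //.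
by field; rewrite ?mulf_neq0 ?expf_neq0 ?gt_eqF.
Qed.

Section RatioAtRoot.
Variables (R : realType) (A B x0 : R).
Hypothesis x0_root : 5 * x0 ^+ 2 - 3 * (A + B) * x0 + A * B = 0.

Lemma hquad_cross (x : R) :
  hquad A x0 * hquad B x - hquad B x0 * hquad A x
  = 15 * (hquad A x0 - hquad B x0) * (x - x0) ^+ 2.
Proof.
apply/eqP; rewrite -subr_eq0; apply/eqP.
have -> : hquad A x0 * hquad B x - hquad B x0 * hquad A x
          - 15 * (hquad A x0 - hquad B x0) * (x - x0) ^+ 2
        = 30 * (B - A) * (5 * x0 ^+ 2 - 3 * (A + B) * x0 + A * B) * (x - x0).
  by rewrite /hquad; ring.
by rewrite x0_root mulr0 mul0r.
Qed.

Lemma hquad_ratio_le (x : R) : 0 < A -> A <= B -> 3 * (A + B) <= 10 * x0 ->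
  hquad A x / hquad B x <= hquad A x0 / hquad B x0.
Proof.
move=> A_gt0 AB x0_big; have B_gt0 := lt_le_trans A_gt0 AB.
have qAx0_ge : 0 <= hquad A x0 - hquad B x0.
  have -> : hquad A x0 - hquad B x0 = (B - A) * (10 * x0 - 3 * (A + B)).
    by rewrite /hquad; ring.
  by rewrite mulr_ge0 ?subr_ge0.
rewrite ler_pdivlMr ?hquad_gt0 // mulrAC ler_pdivrMr ?hquad_gt0 //.
rewrite -subr_ge0 [hquad A x * _]mulrC hquad_cross.
by rewrite mulr_ge0 ?sqr_ge0 // mulr_ge0.
Qed.

End RatioAtRoot.

Lemma xopt_root (R : realType) (A B : R) :
  5 * xopt A B ^+ 2 - 3 * (A + B) * xopt A B + A * B = 0.
Proof.
set S := 1 / 2 * (A ^+ 2 + B ^+ 2) + 1 / 16 * (B - A) ^+ 2.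
have S_ge0 : 0 <= S by rewrite /S; nra.
have sqrtS := sqr_sqrtr S_ge0.
have -> : 5 * xopt A B ^+ 2 - 3 * (A + B) * xopt A B + A * B
          = 4 / 5 * (Num.sqrt S ^+ 2 - S) by rewrite /xopt -/S /S; field.
by rewrite sqrtS subrr mulr0.
Qed.

Lemma xopt_ge (R : realType) (A B : R) : 3 * (A + B) <= 10 * xopt A B.
Proof. rewrite /xopt; set s := Num.sqrt _; have : 0 <= s := sqrtr_ge0 _; lra. Qed.

Lemma xopt_gt0 (R : realType) (A B : R) : 0 < A -> 0 < B -> 0 < xopt A B.
Proof. by move=> A_gt0 B_gt0; have := xopt_ge A B; lra. Qed.

Theorem mainTheorem11 (R : realType) (A B : R) :
  0 < A -> A < B ->
  0 < xopt A B /\ (forall x : R, 0 < x -> rho A B x <= rho A B (xopt A B)).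
Proof.
move=> A_gt0 /ltW AB; have B_gt0 := lt_le_trans A_gt0 AB.
have x0_gt0 := xopt_gt0 A_gt0 B_gt0.
split=> // x x_gt0; rewrite !rhoE // ler_pM2l ?divr_gt0 //.
have ratio_ge0 (y : R) : 0 <= hquad A y / hquad B y.
  by rewrite divr_ge0 // ltW // hquad_gt0.
rewrite ler_sqr ?nnegrE //.
exact: hquad_ratio_le (xopt_root A B) x A_gt0 AB (xopt_ge A B).
Qed.
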